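(* Let $S=\{(X_m,y_m)\}_{m=1}^T\in\mathcal{S}_T$ be fitted in the cyclic ordering, let $n\ge1$, $k=nT$, and define the end-of-cycle average iterate $\bar w_n=\frac1n\sum_{n'=1}^n w_{Tn'}$. Then $$\frac1T\sum_{m=1}^T\|X_m\bar w_n-y_m\|^2\le\frac{T-1}{2n}\le\frac{T^2}{2k}.$$
   Context: Let $d\ge 1$, $T\ge1$. A task is a pair $(X_m,y_m)$ with $X_m\in\mathbb{R}^{n_m\times d}$, $y_m\in\mathbb{R}^{n_m}$ and $\operatorname{rank}(X_m)<d$. $\mathcal{S}_T$ denotes the set of collections $S=\{(X_m,y_m)\}_{m=1}^T$ of $T$ tasks such that $\|X_m\|\le 1$ (spectral norm) for all $m$ and there exists $w\in\mathbb{R}^d$ with $\|w\|\le 1$ and $y_m=X_mw$ for all $m$. Given $S$ and an ordering $\tau:\mathbb{N}^+\to\{1,\dots,T\}$, the iterates are $w_0=0$ and $w_t=w_{t-1}+X_{\tau(t)}^+(y_{\tau(t)}-X_{\tau(t)}w_{t-1})$, with $A^+$ the Moore–Penrose pseudoinverse. The cyclic ordering is $\tau(t)=((t-1)\bmod T)+1$. *)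

From mathcomp Require Import all_boot all_order all_algebra.
From mathcomp Require Import reals.
Set Implicit Arguments. Unset Strict Implicit. Unset Printing Implicit Defensive.
Import Order.TTheory GRing.Theory Num.Theory.
Local Open Scope ring_scope.

Definition sqnorm (R : realType) (p : nat) (v : 'cV[R]_p) : R :=
  \sum_(i < p) v i 0 ^+ 2.

(* B is the Moore-Penrose pseudoinverse of A (the four Penrose conditions,
   which characterise it uniquely). *)
Definition is_pinv (R : realType) (p q : nat) (A : 'M[R]_(p, q)) (B : 'M[R]_(q, p)) : Prop :=
  [/\ A *m B *m A = A, B *m A *m B = B, (A *m B)^T = A *m B & (B *m A)^T = B *m A].

Definition specnorm_le1 (R : realType) (p q : nat) (A : 'M[R]_(p, q)) : Prop :=
  forall v : 'cV[R]_q, sqnorm (A *m v) <= sqnorm v.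

(* Iterates under the cyclic ordering, tasks indexed 0..T-1:
   w_0 = 0, w_t = w_{t-1} + P_{tau t} (y_{tau t} - X_{tau t} w_{t-1}),
   where tau t = (t-1) mod T (0-based), P_m the pseudoinverse of X_m. *)
Fixpoint cyc_iter (R : realType) (d T : nat) (hT : (0 < T)%N) (nm : 'I_T -> nat)
  (X : forall m : 'I_T, 'M[R]_(nm m, d)) (y : forall m : 'I_T, 'cV[R]_(nm m))
  (P : forall m : 'I_T, 'M[R]_(d, nm m)) (t : nat) : 'cV[R]_d :=
  match t with
  | 0 => 0
  | t'.+1 =>
      let w := cyc_iter hT X y P t' in
      let m := Ordinal (ltn_pmod t' hT) in
      w + P m *m (y m - X m *m w)
  end.

From mathcomp Require Import all_boot all_order all_algebra.
From mathcomp Require Import reals ring zify.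

Import Order.TTheory GRing.Theory Num.Theory.
Local Open Scope ring_scope.

(* Write e_t = w_t - w for the error with respect to a realizing vector w.
   Each step subtracts from e_t its orthogonal projection onto the row space
   of the current task, so |e_t|^2 is nonincreasing and e_a - e_b is a sum of
   b - a projections whose squared norms add up to |e_a|^2 - |e_b|^2.  Right
   after task m is fitted its residual vanishes, so at the end of a cycle the
   residual of task m is X_m applied to the displacement over the remaining
   T - m - 1 steps; by Cauchy-Schwarz it is at most (T - m - 1) times the
   decrease of |e|^2 during the cycle.  Summing over tasks and cycles, and
   averaging with Jensen's inequality, bounds the total residual of the
   average iterate by T(T-1)/(2n) |e_0|^2 <= T(T-1)/(2n). *)

Section Euclidean.
Variable R : realType.

Lemma sqr_sum_le (k : nat) (a : 'I_k -> R) :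
  (\sum_(i < k) a i) ^+ 2 <= k%:R * \sum_(i < k) a i ^+ 2.
Proof.
have expand : \sum_(i < k) \sum_(j < k) (a i - a j) ^+ 2
    = 2 * (k%:R * \sum_(i < k) a i ^+ 2 - (\sum_(i < k) a i) ^+ 2).
  rewrite expr2 mulr_suml.
  under eq_bigr => i _ do under eq_bigr => j _ do rewrite sqrrB.
  under [X in _ - X]eq_bigr => i _ do rewrite mulr_sumr.
  under eq_bigr => i _ do rewrite big_split sumrB sumr_const card_ord sumrMnl /=.
  by rewrite big_split sumrB sumr_const card_ord !sumrMnl /=; ring.
have : 0 <= \sum_(i < k) \sum_(j < k) (a i - a j) ^+ 2.
  by apply: sumr_ge0 => i _; apply: sumr_ge0 => j _; apply: sqr_ge0.
by rewrite expand pmulr_rge0 // subr_ge0.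
Qed.

Variable p : nat.
Implicit Types u v : 'cV[R]_p.

Lemma sqnorm_ge0 v : 0 <= sqnorm v.
Proof. by apply: sumr_ge0 => i _; apply: sqr_ge0. Qed.

Lemma sqnormZ (c : R) v : sqnorm (c *: v) = c ^+ 2 * sqnorm v.
Proof. by rewrite /sqnorm mulr_sumr; apply: eq_bigr => i _; rewrite mxE exprMn. Qed.

Lemma sqnormN v : sqnorm (- v) = sqnorm v.
Proof. by apply: eq_bigr => i _; rewrite mxE sqrrN. Qed.

Lemma sqnormD u v : sqnorm (u + v) = sqnorm u + sqnorm v + 2 * (u^T *m v) 0 0.
Proof.
rewrite /sqnorm mxE mulr_sumr -!big_split /=; apply: eq_bigr => i _.
by rewrite !mxE sqrrD; ring.
Qed.

Lemma sqnorm_sum_le {k : nat} (v : 'I_k -> 'cV[R]_p) :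
  sqnorm (\sum_(i < k) v i) <= k%:R * \sum_(i < k) sqnorm (v i).
Proof.
rewrite /sqnorm exchange_big mulr_sumr /=; apply: ler_sum => r _.
by rewrite summxE; apply: sqr_sum_le.
Qed.

Lemma sqnorm_avg_le (k : nat) (v : 'I_k -> 'cV[R]_p) : (0 < k)%N ->
  sqnorm (k%:R^-1 *: \sum_(i < k) v i) <= k%:R^-1 * \sum_(i < k) sqnorm (v i).
Proof.
move=> k_gt0; have k0 : k%:R != 0 :> R by rewrite pnatr_eq0 -lt0n.
rewrite sqnormZ; apply: le_trans (ler_wpM2l (sqr_ge0 _) (sqnorm_sum_le v)) _.
by rewrite expr2 -mulrA mulKf.
Qed.

Definition orthoproj (Q : 'M[R]_p) : Prop := Q *m Q = Q /\ Q^T = Q.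

Lemma sqnorm_orthoproj (Q : 'M[R]_p) v :
  orthoproj Q -> sqnorm v = sqnorm (v - Q *m v) + sqnorm (Q *m v).
Proof.
case=> QQ Qsym; rewrite -{1}(subrK (Q *m v) v) (sqnormD (v - Q *m v)).
suff -> : ((v - Q *m v)^T *m (Q *m v)) 0 0 = 0 by rewrite mulr0 addr0.
by rewrite mulmxA -{2}Qsym -trmx_mul mulmxBr mulmxA QQ subrr trmx0 mul0mx mxE.
Qed.

Lemma pinv_orthoproj (q : nat) (A : 'M[R]_(q, p)) (B : 'M[R]_(p, q)) :
  is_pinv A B -> orthoproj (B *m A).
Proof. by case=> _ BAB _ BAsym; split; rewrite // mulmxA BAB. Qed.

End Euclidean.

Arguments orthoproj {R p}.

Section ProjectionSequence.
Context {R : realType} {p : nat} {Q : nat -> 'M[R]_p} {e : nat -> 'cV[R]_p}.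
Hypothesis Q_orthoproj : forall t, orthoproj (Q t).
Hypothesis eS : forall t, e t.+1 = e t - Q t *m e t.

Lemma sqnorm_projS t : sqnorm (e t) = sqnorm (e t.+1) + sqnorm (Q t *m e t).
Proof. by rewrite eS; apply: sqnorm_orthoproj. Qed.

Lemma proj_telescope a j : e a - e (a + j)%N = \sum_(i < j) Q (a + i)%N *m e (a + i)%N.
Proof.
elim: j => [|j IH]; first by rewrite addn0 subrr big_ord0.
by rewrite big_ord_recr /= -IH addnS eS opprB addrA addrAC.
Qed.

Lemma sqnorm_proj_telescope a j :
  sqnorm (e a) - sqnorm (e (a + j)%N) = \sum_(i < j) sqnorm (Q (a + i)%N *m e (a + i)%N).
Proof.
elim: j => [|j IH]; first by rewrite addn0 subrr big_ord0.
by rewrite big_ord_recr /= -IH addnS (sqnorm_projS (a + j)); ring.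
Qed.

Lemma sqnorm_proj_nonincr a b : (a <= b)%N -> sqnorm (e b) <= sqnorm (e a).
Proof.
move=> /subnKC <-; rewrite -subr_ge0 sqnorm_proj_telescope.
by apply: sumr_ge0 => i _; apply: sqnorm_ge0.
Qed.

Lemma sqnorm_proj_displacement a j :
  sqnorm (e a - e (a + j)%N) <= j%:R * (sqnorm (e a) - sqnorm (e (a + j)%N)).
Proof. by rewrite proj_telescope sqnorm_proj_telescope; apply: sqnorm_sum_le. Qed.

End ProjectionSequence.

Lemma triangular_sumr (R : realType) (T : nat) :
  \sum_(m < T) ((T - m.+1)%N%:R : R) = T%:R * (T%:R - 1) / 2.
Proof.
elim: T => [|T IH]; first by rewrite big_ord0 !mul0r.
rewrite big_ord_recl subn1 /=.
under eq_bigr do rewrite /bump /= add1n subSS.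
by rewrite IH -natr1; field.
Qed.

Section CyclicOrdering.
Context {R : realType} {d T : nat} {T_gt0 : (0 < T)%N} {nm : 'I_T -> nat}.
Context {X : forall m : 'I_T, 'M[R]_(nm m, d)} {y : forall m : 'I_T, 'cV[R]_(nm m)}.
Context {P : forall m : 'I_T, 'M[R]_(d, nm m)} {ws : 'cV[R]_d}.
Hypothesis P_pinv : forall m, is_pinv (X m) (P m).
Hypothesis X_contract : forall m, specnorm_le1 (X m).
Hypothesis y_realizable : forall m, y m = X m *m ws.

Definition task (t : nat) : 'I_T := Ordinal (ltn_pmod t T_gt0).

Definition err (t : nat) : 'cV[R]_d := cyc_iter T_gt0 X y P t - ws.

Definition task_proj (t : nat) : 'M[R]_d := P (task t) *m X (task t).

Lemma task_proj_orthoproj t : orthoproj (task_proj t).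
Proof. exact: pinv_orthoproj. Qed.

Lemma errS t : err t.+1 = err t - task_proj t *m err t.
Proof.
by rewrite /err /= y_realizable -mulmxA !mulmxBr opprB addrAC.
Qed.

Lemma task_fitted t : X (task t) *m err t.+1 = 0.
Proof.
case: (P_pinv (task t)) => XPX _ _ _.
by rewrite errS mulmxBr !mulmxA XPX subrr.
Qed.

Lemma task_cycle i (m : 'I_T) : task (T * i + m) = m.
Proof. by apply: val_inj; rewrite /= mulnC modnMDl modn_small. Qed.

Lemma sqnorm_err_nonincr a b : (a <= b)%N -> sqnorm (err b) <= sqnorm (err a).
Proof. exact: sqnorm_proj_nonincr task_proj_orthoproj errS a b. Qed.

(* Task m is fitted at step T i + m + 1, so X_m only sees the displacement
   over the T - m - 1 remaining steps of the cycle. *)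
Lemma cycle_residual_le i :
  \sum_(m < T) sqnorm (X m *m err (T * i.+1)) <=
  T%:R * (T%:R - 1) / 2 * (sqnorm (err (T * i)) - sqnorm (err (T * i.+1))).
Proof.
rewrite -triangular_sumr mulr_suml; apply: ler_sum => m _.
set s := (T * i)%N.
have cycle_end : ((s + m).+1 + (T - m.+1))%N = (T * i.+1)%N.
  by have := ltn_ord m; rewrite /s mulnS; lia.
have fitted : X m *m err (s + m).+1 = 0 by have := task_fitted (s + m); rewrite task_cycle.
have -> : X m *m err (T * i.+1) = - (X m *m (err (s + m).+1 - err (T * i.+1))).
  by rewrite (mulmxBr (X m) (err (s + m).+1)) fitted sub0r opprK.
rewrite sqnormN; apply: le_trans (X_contract m _) _.
rewrite -{1 2}cycle_end.
apply: le_trans (sqnorm_proj_displacement task_proj_orthoproj errS _ _) _.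
rewrite cycle_end; apply: ler_wpM2l => //; rewrite lerD2r.
by apply: sqnorm_err_nonincr; rewrite -addnS leq_addr.
Qed.

Lemma sum_cycle_residual_le n :
  \sum_(i < n) \sum_(m < T) sqnorm (X m *m err (T * i.+1)) <=
  T%:R * (T%:R - 1) / 2 * sqnorm (err 0).
Proof.
have c_ge0 : 0 <= T%:R * (T%:R - 1) / 2 :> R.
  by rewrite -triangular_sumr; apply: sumr_ge0 => m _; apply: ler0n.
apply: (le_trans (ler_sum _ (fun (i : 'I_n) _ => cycle_residual_le i))).
rewrite -mulr_sumr ler_wpM2l //.
rewrite -(big_mkord xpredT (fun i => sqnorm (err (T * i)) - sqnorm (err (T * i.+1)))).
rewrite (telescope_sumr_eq (fun i => - sqnorm (err (T * i)))) //; last first.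
  by move=> i _; rewrite opprK addrC.
by rewrite muln0 opprK gerDr oppr_le0 sqnorm_ge0.
Qed.

Definition avg_iterate (n : nat) : 'cV[R]_d :=
  n%:R^-1 *: \sum_(1 <= n' < n.+1) cyc_iter T_gt0 X y P (T * n').

Lemma avg_iterate_residual_le n : (0 < n)%N ->
  \sum_(m < T) sqnorm (X m *m avg_iterate n - y m) <=
  n%:R^-1 * (T%:R * (T%:R - 1) / 2 * sqnorm (err 0)).
Proof.
move=> n_gt0; have n0 : n%:R != 0 :> R by rewrite pnatr_eq0 -lt0n.
have avg_err : avg_iterate n - ws = n%:R^-1 *: \sum_(i < n) err (T * i.+1).
  rewrite /avg_iterate big_add1 /= big_mkord /err sumrB sumr_const card_ord scalerBr.
  by rewrite -scaler_nat scalerA mulVf ?scale1r.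
apply: (le_trans (y := \sum_(m < T) n%:R^-1 * \sum_(i < n) sqnorm (X m *m err (T * i.+1)))).
  apply: ler_sum => m _; rewrite y_realizable -mulmxBr avg_err -scalemxAr mulmx_sumr.
  exact: sqnorm_avg_le.
rewrite -mulr_sumr exchange_big ler_wpM2l ?invr_ge0 //.
exact: sum_cycle_residual_le.
Qed.

End CyclicOrdering.

Theorem mainTheorem17 (R : realType) (d T : nat) (hd : (1 <= d)%N) (hT : (0 < T)%N)
  (nm : 'I_T -> nat)
  (X : forall m : 'I_T, 'M[R]_(nm m, d)) (y : forall m : 'I_T, 'cV[R]_(nm m))
  (P : forall m : 'I_T, 'M[R]_(d, nm m))
  (hP : forall m, is_pinv (X m) (P m))
  (hrank : forall m, (\rank (X m) < d)%N)
  (hnorm : forall m, specnorm_le1 (X m))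
  (hreal : exists w : 'cV[R]_d, sqnorm w <= 1 /\ forall m, y m = X m *m w)
  (n : nat) (hn : (1 <= n)%N) :
  let k := (n * T)%N in
  let wbar := (n%:R : R)^-1 *: \sum_(1 <= n' < n.+1) cyc_iter hT X y P (T * n') in
  (T%:R : R)^-1 * (\sum_(m < T) sqnorm (X m *m wbar - y m)) <= ((T%:R : R) - 1) / (2 * n%:R)
  /\ ((T%:R : R) - 1) / (2 * n%:R) <= ((T%:R : R) ^+ 2) / (2 * k%:R).
Proof.
move=> k wbar; case: hreal => ws [ws_le1 y_ws].
have n0 : n%:R != 0 :> R by rewrite pnatr_eq0 -lt0n.
have T0 : T%:R != 0 :> R by rewrite pnatr_eq0 -lt0n.
have T_ge1 : 1 <= T%:R :> R by rewrite ler1n.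
have err0_le1 : sqnorm (@err _ _ _ hT _ X y P ws 0) <= 1 by rewrite /err sub0r sqnormN.
split.
  apply: le_trans (ler_wpM2l _ (avg_iterate_residual_le (T_gt0 := hT) hP hnorm y_ws n hn)) _.
    by rewrite invr_ge0.
  set e := sqnorm _.
  have -> : T%:R^-1 * (n%:R^-1 * (T%:R * (T%:R - 1) / 2 * e)) = (T%:R - 1) / (2 * n%:R) * e.
    by field; rewrite n0 T0.
  apply: ler_piMr err0_le1.
  by apply: divr_ge0; rewrite ?subr_ge0 // mulr_ge0.
have -> : T%:R ^+ 2 / (2 * k%:R) = T%:R / (2 * n%:R) :> R.
  by rewrite /k natrM; field; rewrite n0 T0.
by apply: ler_wpM2r; rewrite ?gerBl // invr_ge0 mulr_ge0.
Qed.
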